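(* Let $\mathcal{F}^\mathcal{P}=(\mu_n,\mathcal{S}_n,L_n,\pi_n)_{n\ge1}$ be the family of product chains induced by $\mathcal{F}$ and $\mathcal{P}$. Then $\mathcal{F}^\mathcal{P}$ has an $L^2$-cutoff if and only if there is a sequence $t_n>0$ such that \[\lim_{n\to\infty}\sum_{i=1}^{\ell_n}d_{n,i,2}(\mu_{n,i},ap_{n,i}t_n)^2=\begin{cases}0,&a>1,\\ \infty,&0<a<1.\end{cases}\] Further, with $\mathcal{T}_n(\epsilon)=\min\{t\ge0:\sum_{i=1}^{\ell_n}d_{n,i,2}(\mu_{n,i},p_{n,i}t)^2\le\epsilon\}$, one has \[T_{n,2}(\mu_n,\sqrt{e^\epsilon-1})\le\mathcal{T}_n(\epsilon)\le T_{n,2}(\mu_n,\sqrt\epsilon)\quad\text{for all }\epsilon>0.\]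
   Context: $\mathcal{F}=\{(\mu_{n,i},\mathcal{S}_{n,i},L_{n,i},\pi_{n,i}):1\le i\le\ell_n,n\ge1\}$ is a triangular array of irreducible continuous-time finite Markov chains (initial distribution $\mu_{n,i}$, generator $L_{n,i}$, stationary distribution $\pi_{n,i}$), and $\mathcal{P}=\{p_{n,i}>0\}$ a triangular array with $\sum_{i=1}^{\ell_n}p_{n,i}\le1$. The product chain has $\mathcal{S}_n=\prod_i\mathcal{S}_{n,i}$, $\mu_n=\mu_{n,1}\times\dots\times\mu_{n,\ell_n}$, $\pi_n=\pi_{n,1}\times\dots\times\pi_{n,\ell_n}$ and $L_n=\sum_{i=1}^{\ell_n}p_{n,i}I_{n,1}\otimes\dots\otimes I_{n,i-1}\otimes L_{n,i}\otimes I_{n,i+1}\otimes\dots\otimes I_{n,\ell_n}$ ($I_{n,i}$ identity on $\mathcal{S}_{n,i}$). For a continuous-time chain, $d_2(\mu,t)=\big(\sum_y|\mu e^{tL}(y)/\pi(y)-1|^2\pi(y)\big)^{1/2}$; $d_{n,2}$, $d_{n,i,2}$ are these for the product chain and the $(n,i)$ component, and $T_{n,2}(\mu_n,\epsilon)=\min\{t\ge0:d_{n,2}(\mu_n,t)\le\epsilon\}$. $L^2$-cutoff: there is $t_n>0$ with $d_{n,2}(\mu_n,(1+a)t_n)\to0$ and $d_{n,2}(\mu_n,(1-a)t_n)\to\infty$ for all $a\in(0,1)$. *)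

From Stdlib Require Import Reals List Arith ClassicalEpsilon.
Import ListNotations.
Open Scope R_scope.

Definition fsum {X} (s : list X) (f : X -> R) : R :=
  fold_right (fun x acc => f x + acc) 0 s.
Definition fprod {X} (s : list X) (f : X -> R) : R :=
  fold_right (fun x acc => f x * acc) 1 s.

Fixpoint vpow {X} (s : list X) (v : X -> R) (A : X -> X -> R) (k : nat) : X -> R :=
  match k with
  | O => v
  | S k' => fun y => fsum s (fun x => vpow s v A k' x * A x y)
  end.

Definition evol {X} (s : list X) (v : X -> R) (A : X -> X -> R) (t : R) (y : X) : R :=
  epsilon (inhabits 0)
    (fun l => infinite_sum (fun k => t ^ k / INR (fact k) * vpow s v A k y) l).

Definition d2 {X} (s : list X) (pi mu : X -> R) (L : X -> X -> R) (t : R) : R :=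
  sqrt (fsum s (fun y => (Rabs (evol s mu L t y / pi y - 1)) ^ 2 * pi y)).

Definition is_distribution {X} (s : list X) (v : X -> R) : Prop :=
  (forall x, In x s -> 0 <= v x) /\ fsum s v = 1.

Definition is_generator {X} (s : list X) (L : X -> X -> R) : Prop :=
  (forall x y, In x s -> In y s -> x <> y -> 0 <= L x y) /\
  (forall x, In x s -> fsum s (fun y => L x y) = 0).

Inductive reach {X} (s : list X) (L : X -> X -> R) : X -> X -> Prop :=
  | reach_refl x : reach s L x x
  | reach_step x z y : In z s -> 0 < L x z -> reach s L z y -> reach s L x y.

Definition irreducible {X} (s : list X) (L : X -> X -> R) : Prop :=
  forall x y, In x s -> In y s -> reach s L x y.

Definition is_stationary {X} (s : list X) (L : X -> X -> R) (pi : X -> R) : Prop :=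
  is_distribution s pi /\ forall y, In y s -> fsum s (fun x => pi x * L x y) = 0.

Definition finite_chain {X} (s : list X) (mu : X -> R) (L : X -> X -> R) (pi : X -> R) : Prop :=
  NoDup s /\ s <> [] /\ is_distribution s mu /\ is_generator s L /\
  irreducible s L /\ is_stationary s L pi.

(** Component (n,i) (0-based i < ell n) has state space {0,...,m n i - 1}. *)

Fixpoint prod_enum (ms : list nat) : list (list nat) :=
  match ms with
  | [] => [[]]
  | a :: ms' => flat_map (fun k => map (cons k) (prod_enum ms')) (seq 0 a)
  end.

Definition prod_space (ell : nat -> nat) (m : nat -> nat -> nat) (n : nat) : list (list nat) :=
  prod_enum (map (m n) (seq 0 (ell n))).

Definition prod_dist (ell : nat -> nat) (v : nat -> nat -> nat -> R) (n : nat)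
  (x : list nat) : R :=
  fprod (seq 0 (ell n)) (fun i => v n i (nth i x 0%nat)).

(** L_n = sum_i p_{n,i} I (x) ... (x) L_{n,i} (x) ... (x) I  (entrywise) *)
Definition prod_gen (ell : nat -> nat) (p : nat -> nat -> R)
  (L : nat -> nat -> nat -> nat -> R) (n : nat) (x y : list nat) : R :=
  fsum (seq 0 (ell n)) (fun i =>
    p n i * L n i (nth i x 0%nat) (nth i y 0%nat) *
    fprod (seq 0 (ell n)) (fun j =>
      if Nat.eqb j i then 1
      else if Nat.eqb (nth j x 0%nat) (nth j y 0%nat) then 1 else 0)).

Definition dprod ell m (mu pi : nat -> nat -> nat -> R) L p (n : nat) (t : R) : R :=
  d2 (prod_space ell m n) (prod_dist ell pi n) (prod_dist ell mu n) (prod_gen ell p L n) t.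

Definition dcomp (m : nat -> nat -> nat) (mu pi : nat -> nat -> nat -> R)
  (L : nat -> nat -> nat -> nat -> R) (n i : nat) (t : R) : R :=
  d2 (seq 0 (m n i)) (pi n i) (mu n i) (L n i) t.

Definition Ssum ell m mu pi L (p : nat -> nat -> R) (n : nat) (t : R) : R :=
  fsum (seq 0 (ell n)) (fun i => (dcomp m mu pi L n i (p n i * t)) ^ 2).

Definition L2_cutoff (d : nat -> R -> R) : Prop :=
  exists tn : nat -> R, (forall n, 0 < tn n) /\
    forall a, 0 < a < 1 ->
      Un_cv (fun n => d n ((1 + a) * tn n)) 0 /\
      cv_infty (fun n => d n ((1 - a) * tn n)).

Definition min_time (f : R -> R) (eps : R) : R :=
  epsilon (inhabits 0)
    (fun T => 0 <= T /\ f T <= eps /\ forall t, 0 <= t -> f t <= eps -> T <= t).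

From Pilot Require Import Defs.
From Stdlib Require Import Reals List Arith Lra Lia ClassicalEpsilon Classical.
From Coquelicot Require Import Coquelicot.
Import ListNotations.
Open Scope R_scope.

(** Write [chi2] for the squared [L^2] distance [d_2^2].  For a product chain started at a
    product measure the law stays a product, the [i]-th factor being the [i]-th chain run
    at speed [p n i]; hence [1 + chi2_n(t) = prod_i (1 + chi2_{n,i}(p n i t))], and with
    [S_n(t) = sum_i chi2_{n,i}(p n i t)] the elementary bounds
    [1 + S <= prod (1 + chi2_i) <= exp S] give [S_n <= d_{n,2}^2 <= exp S_n - 1].  Both
    statements are consequences of this sandwich: cutoff transfers because [d_{n,2}^2 -> 0]
    iff [S_n -> 0] and [d_{n,2} -> oo] iff [S_n -> oo] (monotonicity of [S_n] handles
    [a >= 2]), and the mixing-time bounds follow by comparing sublevel sets.  For the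
    minimal times to exist one needs continuity and [S_n(t) -> 0]; the latter comes from
    the exponential decay of [chi2] given by a Poincare inequality for the irreducible
    component chains. *)

Section FiniteSums.
Context {X : Type}.
Implicit Types (l : list X) (f g : X -> R).

Lemma fsum_ext l f g : (forall x, In x l -> f x = g x) -> fsum l f = fsum l g.
Proof. induction l; simpl; intros H; auto. rewrite H, IHl; auto. Qed.

Lemma fprod_ext l f g : (forall x, In x l -> f x = g x) -> fprod l f = fprod l g.
Proof. induction l; simpl; intros H; auto. rewrite H, IHl; auto. Qed.

Lemma fsum_plus l f g : fsum l (fun x => f x + g x) = fsum l f + fsum l g.
Proof. induction l; simpl; [lra | rewrite IHl; lra]. Qed.

Lemma fsum_minus l f g : fsum l (fun x => f x - g x) = fsum l f - fsum l g.
Proof. induction l; simpl; [lra | rewrite IHl; lra]. Qed.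

Lemma fsum_scal l c f : fsum l (fun x => c * f x) = c * fsum l f.
Proof. induction l; simpl; [lra | rewrite IHl; lra]. Qed.

Lemma fsum_scal_r l c f : fsum l (fun x => f x * c) = fsum l f * c.
Proof. induction l; simpl; [lra | rewrite IHl; lra]. Qed.

Lemma fsum_const l c : fsum l (fun _ => c) = c * INR (length l).
Proof. induction l; simpl length; [simpl; lra|]. rewrite S_INR. simpl. rewrite IHl. ring. Qed.

Lemma fsum_zero l : fsum l (fun _ => 0) = 0.
Proof. rewrite fsum_const. ring. Qed.

Lemma fsum_app l1 l2 f : fsum (l1 ++ l2) f = fsum l1 f + fsum l2 f.
Proof. induction l1; simpl; [lra | rewrite IHl1; lra]. Qed.

Lemma fsum_le l f g : (forall x, In x l -> f x <= g x) -> fsum l f <= fsum l g.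
Proof.
  induction l as [|a l IH]; simpl; intros H; [lra|].
  pose proof (H a (or_introl eq_refl)). pose proof (IH (fun x Hx => H x (or_intror Hx))). lra.
Qed.

Lemma fsum_nonneg l f : (forall x, In x l -> 0 <= f x) -> 0 <= fsum l f.
Proof. intros H. rewrite <- (fsum_zero l). apply fsum_le; auto. Qed.

Lemma fsum_ge_term l f a : (forall x, In x l -> 0 <= f x) -> In a l -> f a <= fsum l f.
Proof.
  induction l as [|b l IH]; simpl; intros H Ha; [tauto|].
  assert (0 <= fsum l f) by (apply fsum_nonneg; auto).
  pose proof (H b (or_introl eq_refl)).
  destruct Ha as [<-|Ha]; [lra|]. pose proof (IH (fun x Hx => H x (or_intror Hx)) Ha). lra.
Qed.

Lemma fsum_eq0_nonneg l f : (forall x, In x l -> 0 <= f x) -> fsum l f = 0 ->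
  forall a, In a l -> f a = 0.
Proof. intros H H0 a Ha. pose proof (fsum_ge_term l f a H Ha). pose proof (H a Ha). lra. Qed.

Lemma fsum_abs l f : Rabs (fsum l f) <= fsum l (fun x => Rabs (f x)).
Proof.
  induction l; simpl; [rewrite Rabs_R0; lra|].
  eapply Rle_trans; [apply Rabs_triang | lra].
Qed.

Lemma fprod_mult l f g : fprod l (fun x => f x * g x) = fprod l f * fprod l g.
Proof. induction l; simpl; [lra | rewrite IHl; lra]. Qed.

Lemma fprod_const1 l : fprod l (fun _ => 1) = 1.
Proof. induction l; simpl; [|rewrite IHl]; ring. Qed.

Lemma fprod_pos l f : (forall x, In x l -> 0 < f x) -> 0 < fprod l f.
Proof. induction l; simpl; intros H; [lra|]. apply Rmult_lt_0_compat; auto. Qed.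

Lemma fprod_inv l f : (forall x, In x l -> f x <> 0) -> fprod l (fun x => / f x) = / fprod l f.
Proof.
  induction l; simpl; intros H; [now rewrite Rinv_1|].
  rewrite IHl, Rinv_mult; auto.
Qed.

Lemma fprod_1plus_bounds l f : (forall x, In x l -> 0 <= f x) ->
  1 + fsum l f <= fprod l (fun x => 1 + f x) <= exp (fsum l f).
Proof.
  induction l as [|a l IH]; simpl; intros H; [rewrite exp_0; lra|].
  destruct IH as [H1 H2]; [auto|].
  pose proof (H a (or_introl eq_refl)). pose proof (exp_ineq1_le (f a)).
  assert (0 <= fsum l f) by (apply fsum_nonneg; auto).
  rewrite exp_plus. split; [nra|]. apply Rmult_le_compat; lra.
Qed.

Lemma finite_uniform_bound l (P : X -> R -> Prop) :
  (forall x K K', P x K -> K <= K' -> P x K') ->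
  (forall x, In x l -> exists K, P x K) -> exists K, forall x, In x l -> P x K.
Proof.
  intros Hmono. induction l as [|a l IH]; simpl; intros H; [exists 0; tauto|].
  destruct IH as [K1 HK1]; [auto|].
  destruct (H a (or_introl eq_refl)) as [K0 HK0].
  exists (Rmax K0 K1). intros x [<-|Hx]; eapply Hmono; eauto; [apply Rmax_l | apply Rmax_r].
Qed.
End FiniteSums.

Lemma fsum_swap {X Y} (l1 : list X) (l2 : list Y) f :
  fsum l1 (fun x => fsum l2 (fun y => f x y)) = fsum l2 (fun y => fsum l1 (fun x => f x y)).
Proof.
  induction l1; simpl; [symmetry; apply fsum_zero|].
  rewrite IHl1, <- fsum_plus. reflexivity.
Qed.

Lemma fsum_map {X Y} (h : X -> Y) l f : fsum (map h l) f = fsum l (fun x => f (h x)).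
Proof. induction l; simpl; auto. rewrite IHl; auto. Qed.

Lemma fprod_map {X Y} (h : X -> Y) l f : fprod (map h l) f = fprod l (fun x => f (h x)).
Proof. induction l; simpl; auto. rewrite IHl; auto. Qed.

Lemma fsum_flat_map {X Y} (h : X -> list Y) l f :
  fsum (flat_map h l) f = fsum l (fun x => fsum (h x) f).
Proof. induction l; simpl; auto. rewrite fsum_app, IHl; auto. Qed.

Lemma fprod_seq_S n g : fprod (seq 0 (S n)) g = g 0%nat * fprod (seq 0 n) (fun i => g (S i)).
Proof. simpl. rewrite <- seq_shift, fprod_map. reflexivity. Qed.

Lemma fsum_indicator (l : list nat) a h : NoDup l -> In a l ->
  fsum l (fun k => if Nat.eqb k a then h k else 0) = h a.
Proof.
  induction l as [|b l IH]; simpl; intros Hn Ha; [tauto|]. inversion Hn; subst.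
  destruct (Nat.eqb_spec b a) as [<-|Hne].
  - rewrite (fsum_ext l _ (fun _ => 0)), fsum_zero; [ring|].
    intros x Hx. destruct (Nat.eqb_spec x b); [subst; tauto | auto].
  - destruct Ha as [->|Ha]; [tauto|]. rewrite IH; auto; ring.
Qed.

Lemma fprod_split (l : list nat) f i : NoDup l -> In i l ->
  fprod l f = f i * fprod l (fun j => if Nat.eqb j i then 1 else f j).
Proof.
  induction l as [|a l IH]; simpl; intros Hn Ha; [tauto|]. inversion Hn; subst.
  destruct (Nat.eqb_spec a i) as [<-|Hne].
  - rewrite (fprod_ext l (fun j => if Nat.eqb j a then 1 else f j) f); [ring|].
    intros x Hx. destruct (Nat.eqb_spec x a); [subst; tauto | auto].
  - destruct Ha as [->|Ha]; [tauto|]. rewrite (IH H2 Ha) at 1. ring.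
Qed.

(** Stated on [R -> R] so that the extensionality side goal is an equation in [R], on
    which [ring] works. *)
Lemma is_derive_ext_R (f g : R -> R) t l :
  (forall u, f u = g u) -> is_derive f t l -> is_derive g t l.
Proof. apply is_derive_ext. Qed.

Lemma is_derive_fsum {X} (l : list X) (f : X -> R -> R) f' t :
  (forall x, In x l -> is_derive (f x) t (f' x)) ->
  is_derive (fun t => fsum l (fun x => f x t)) t (fsum l f').
Proof.
  induction l; simpl; intros H.
  - apply (is_derive_const (K := R_AbsRing) 0 t).
  - apply (is_derive_plus (fun t => f a t) (fun t => fsum l (fun x => f x t))); auto.
Qed.

Lemma is_derive_fprod (l : list nat) f f' t : NoDup l ->
  (forall x, In x l -> is_derive (f x) t (f' x)) ->
  is_derive (fun t => fprod l (fun x => f x t)) t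
    (fsum l (fun i => f' i * fprod l (fun j => if Nat.eqb j i then 1 else f j t))).
Proof.
  induction l as [|a l IH]; simpl; intros Hn H.
  - apply (is_derive_const (K := R_AbsRing) 1 t).
  - inversion Hn; subst.
    replace (_ + _) with (f' a * fprod l (fun x => f x t) +
      f a t * fsum l (fun i => f' i * fprod l (fun j => if Nat.eqb j i then 1 else f j t))).
    + apply Derive.is_derive_mult; auto.
    + rewrite Nat.eqb_refl, Rmult_1_l, <- fsum_scal. f_equal.
      * f_equal. apply fprod_ext. intros x Hx. destruct (Nat.eqb_spec x a); [subst; tauto | auto].
      * apply fsum_ext. intros x Hx. destruct (Nat.eqb_spec a x); [subst; tauto | ring].
Qed.

Lemma is_derive_dilate (f : R -> R) c t df :
  is_derive f (c * t) df -> is_derive (fun t => f (c * t)) t (c * df).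
Proof.
  intros Hf. apply (is_derive_comp f (fun t => c * t) t df c Hf).
  pose proof (is_derive_scal (fun t => t) t c 1 (is_derive_id (K := R_AbsRing) t)) as Hc.
  now rewrite Rmult_1_r in Hc.
Qed.

Lemma is_derive_continuity_pt (f : R -> R) x l : is_derive f x l -> continuity_pt f x.
Proof.
  intros H. apply continuity_pt_filterlim.
  apply (ex_derive_continuous (K := R_AbsRing) (V := R_NormedModule)). now exists l.
Qed.

Lemma is_derive_nonpos_nonincr (f f' : R -> R) a b :
  (forall t, is_derive f t (f' t)) -> (forall t, a <= t <= b -> f' t <= 0) -> a <= b ->
  f b <= f a.
Proof.
  intros Hd Hn Hab. destruct (MVT_gen f a b f') as (c & Hc & Heq).
  - intros; auto.
  - intros; eapply is_derive_continuity_pt; eauto.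
  - rewrite Rmin_left, Rmax_right in Hc by lra.
    specialize (Hn c Hc). assert (f' c * (b - a) <= 0) by nra. lra.
Qed.

Lemma gronwall (W W' : R -> R) c :
  (forall t, is_derive W t (W' t)) -> (forall t, W' t <= - c * W t) ->
  forall t, 0 <= t -> W t <= exp (- c * t) * W 0.
Proof.
  intros Hd Hn t Ht.
  assert (Hmono : exp (c * t) * W t <= exp (c * 0) * W 0).
  { apply (is_derive_nonpos_nonincr (fun t => exp (c * t) * W t)
      (fun t => c * exp (c * t) * W t + exp (c * t) * W' t) 0 t); auto.
    - intros u. apply (Derive.is_derive_mult (fun t => exp (c * t)) W u); auto.
      apply (is_derive_dilate exp), is_derive_exp.
    - intros u _. specialize (Hn u). pose proof (exp_pos (c * u)). nra. }
  rewrite Rmult_0_r, exp_0, Rmult_1_l in Hmono.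
  replace (W t) with (exp (- c * t) * (exp (c * t) * W t)).
  - apply Rmult_le_compat_l; [left; apply exp_pos | auto].
  - rewrite <- Rmult_assoc, <- exp_plus. replace (- c * t + c * t) with 0 by ring.
    rewrite exp_0; ring.
Qed.

Lemma twice_mult_le_sq a b q : 2 * a * b * q <= Rabs q * (a ^ 2 + b ^ 2).
Proof.
  pose proof (pow2_ge_0 (a - b)). pose proof (pow2_ge_0 (a + b)).
  destruct (Rle_or_lt 0 q); [rewrite Rabs_right by lra | rewrite Rabs_left by lra]; nra.
Qed.

Lemma bilinear_le_sq_norm {X} (s : list X) (A : X -> X -> R) : exists K, forall h : X -> R,
  fsum s (fun y => 2 * h y * fsum s (fun x => h x * A x y)) <= K * fsum s (fun y => h y ^ 2).
Proof.
  set (Am := fsum s (fun x => fsum s (fun y => Rabs (A x y)))).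
  assert (HAm : forall x y, In x s -> In y s -> Rabs (A x y) <= Am).
  { intros x z Hx Hz. apply Rle_trans with (fsum s (fun y => Rabs (A x y))).
    - apply (fsum_ge_term s (fun y => Rabs (A x y))); auto. intros; apply Rabs_pos.
    - apply (fsum_ge_term s (fun x => fsum s (fun y => Rabs (A x y)))); auto.
      intros; apply fsum_nonneg; intros; apply Rabs_pos. }
  exists (2 * Am * INR (length s)). intros h.
  apply Rle_trans with (fsum s (fun y => fsum s (fun x => Am * h x ^ 2 + Am * h y ^ 2))).
  - apply fsum_le. intros z Hz. rewrite <- fsum_scal. apply fsum_le. intros x Hx.
    pose proof (HAm x z Hx Hz). pose proof (twice_mult_le_sq (h z) (h x) (A x z)).
    pose proof (pow2_ge_0 (h x)). pose proof (pow2_ge_0 (h z)). nra.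
  - apply Req_le.
    rewrite (fsum_ext s _ (fun y => Am * fsum s (fun x => h x ^ 2) + Am * INR (length s) * h y ^ 2)).
    + rewrite fsum_plus, fsum_scal, fsum_scal, fsum_const. ring.
    + intros z _. rewrite fsum_plus, fsum_scal, fsum_const. ring.
Qed.

(** Gronwall's inequality for the squared norm of the solution. *)
Lemma forward_equation_zero {X} (s : list X) (A : X -> X -> R) (h : R -> X -> R) :
  (forall t y, In y s -> is_derive (fun t => h t y) t (fsum s (fun x => h t x * A x y))) ->
  (forall y, In y s -> h 0 y = 0) ->
  forall t y, 0 <= t -> In y s -> h t y = 0.
Proof.
  intros Hh H0 t y Ht Hy.
  set (N t := fsum s (fun y => h t y ^ 2)).
  set (N' t := fsum s (fun y => 2 * h t y * fsum s (fun x => h t x * A x y))).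
  assert (HN : forall t, is_derive N t (N' t)).
  { intros u. apply is_derive_fsum. intros z Hz.
    replace (2 * h u z * _) with (INR 2 * fsum s (fun x => h u x * A x z) * h u z ^ Init.Nat.pred 2)
      by (simpl; ring).
    apply (is_derive_pow (fun t => h t z)), Hh, Hz. }
  destruct (bilinear_le_sq_norm s A) as [K HK].
  assert (HNt : N t <= exp (- - K * t) * N 0).
  { apply (gronwall N N' (- K)); auto. intros u. specialize (HK (h u)). unfold N, N'. lra. }
  assert (HN0 : N 0 = 0).
  { unfold N. transitivity (fsum s (fun _ => 0)); [|apply fsum_zero].
    apply fsum_ext. intros z Hz. rewrite H0; auto. ring. }
  rewrite HN0, Rmult_0_r in HNt.
  assert (Hsq : forall y, In y s -> 0 <= h t y ^ 2) by (intros; apply pow2_ge_0).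
  assert (Hz : N t = 0) by (pose proof (fsum_nonneg s _ Hsq); unfold N in *; lra).
  pose proof (fsum_eq0_nonneg s _ Hsq Hz y Hy). nra.
Qed.

Lemma forward_equation_unique {X} (s : list X) (A : X -> X -> R) (f g : R -> X -> R) :
  (forall t y, In y s -> is_derive (fun t => f t y) t (fsum s (fun x => f t x * A x y))) ->
  (forall t y, In y s -> is_derive (fun t => g t y) t (fsum s (fun x => g t x * A x y))) ->
  (forall y, In y s -> f 0 y = g 0 y) ->
  forall t y, 0 <= t -> In y s -> f t y = g t y.
Proof.
  intros Hf Hg H0 t y Ht Hy.
  enough (f t y - g t y = 0) by lra.
  apply (forward_equation_zero s A (fun t y => f t y - g t y)); auto.
  - intros u z Hz.
    replace (fsum s (fun x => (f u x - g u x) * A x z))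
      with (fsum s (fun x => f u x * A x z) - fsum s (fun x => g u x * A x z))
      by (rewrite <- fsum_minus; apply fsum_ext; intros; ring).
    apply (is_derive_minus (K := R_AbsRing) (V := R_NormedModule) (fun t => f t z) (fun t => g t z)); auto.
  - intros z Hz. rewrite H0; auto; ring.
Qed.

Lemma is_derive_0_const (f : R -> R) a b : (forall t, is_derive f t 0) -> f a = f b.
Proof.
  intros H.
  assert (Hf : forall a b, a <= b -> f b <= f a).
  { intros. apply (is_derive_nonpos_nonincr f (fun _ => 0)); auto. intros; lra. }
  assert (Hg : forall a b, a <= b -> - f b <= - f a).
  { intros. apply (is_derive_nonpos_nonincr (fun t => - f t) (fun _ => 0)); auto; [|intros; lra].
    intros t. rewrite <- Ropp_0. apply (is_derive_opp (K := R_AbsRing) (V := R_NormedModule)). auto. }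
  destruct (Rle_dec a b); [specialize (Hf a b) | specialize (Hf b a)];
    [specialize (Hg a b) | specialize (Hg b a)]; lra.
Qed.

Lemma is_series_fsum {X} (l : list X) (g : X -> nat -> R) (sg : X -> R) :
  (forall x, In x l -> is_series (g x) (sg x)) ->
  is_series (fun k => fsum l (fun x => g x k)) (fsum l sg).
Proof.
  induction l as [|a l IH]; simpl; intros H.
  - apply is_series_Reals. intros e He. exists 0%nat. intros n _.
    unfold R_dist. rewrite sum_cte, Rmult_0_l, Rminus_0_r, Rabs_R0. auto.
  - apply (is_series_plus (V := R_NormedModule)); auto.
Qed.

Lemma CV_radius_infinite (a : nat -> R) :
  (forall r, CV_disk a r) -> forall x, Rbar_lt (Rabs x) (CV_radius a).
Proof.
  intros H x. unfold CV_radius. destruct (Lub_Rbar_correct (CV_disk a)) as [Hub _].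
  specialize (Hub (Rabs x + 1) (H _)).
  destruct (Lub_Rbar (CV_disk a)); simpl in *; auto; lra.
Qed.

Section MatrixExponential.
Context {X : Type} (s : list X) (v : X -> R) (A : X -> X -> R).

Lemma vpow_geometric_bound y : exists K C, forall k, Rabs (vpow s v A k y) <= K * C ^ k.
Proof.
  set (N k := fsum s (fun x => Rabs (vpow s v A k x))).
  set (col y := fsum s (fun x => Rabs (A x y))).
  set (M := fsum s col).
  assert (Hcol : forall y, 0 <= col y) by (intros; apply fsum_nonneg; intros; apply Rabs_pos).
  assert (HM : 0 <= M) by (apply fsum_nonneg; auto).
  assert (HN : forall k, 0 <= N k) by (intros; apply fsum_nonneg; intros; apply Rabs_pos).
  assert (Hstep : forall k y, Rabs (vpow s v A (S k) y) <= N k * col y).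
  { intros k z. simpl. eapply Rle_trans; [apply fsum_abs|].
    unfold N. rewrite <- fsum_scal_r. apply fsum_le. intros x Hx. rewrite Rabs_mult.
    apply Rmult_le_compat_l; [apply Rabs_pos|].
    apply (fsum_ge_term s (fun x => Rabs (A x z))); auto. intros; apply Rabs_pos. }
  assert (HNk : forall k, N k <= N 0%nat * M ^ k).
  { induction k as [|k IH]; [simpl; lra|].
    apply Rle_trans with (N k * M).
    - unfold N at 1, M. rewrite <- fsum_scal. apply fsum_le. intros. apply Hstep.
    - simpl. apply Rle_trans with (N 0%nat * M ^ k * M); [apply Rmult_le_compat_r; auto | lra]. }
  exists (Rabs (v y) + N 0%nat * col y), (M + 1). intros [|k].
  - simpl. pose proof (HN 0%nat). pose proof (Hcol y). nra.
  - eapply Rle_trans; [apply Hstep|].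
    assert (HP : M ^ k <= (M + 1) ^ S k).
    { apply Rle_trans with ((M + 1) ^ k); [apply pow_incr; lra|].
      simpl. pose proof (pow_le (M + 1) k). nra. }
    pose proof (pow_le (M + 1) (S k)). pose proof (HN 0%nat). pose proof (Hcol y).
    pose proof (Rabs_pos (v y)).
    apply Rle_trans with (N 0%nat * M ^ k * col y); [apply Rmult_le_compat_r; auto|].
    apply Rle_trans with (N 0%nat * (M + 1) ^ S k * col y); [|nra].
    apply Rmult_le_compat_r, Rmult_le_compat_l; auto.
Qed.

Definition evol_coef (y : X) (k : nat) : R := vpow s v A k y / INR (fact k).

Lemma evol_coef_CV_disk y r : CV_disk (evol_coef y) r.
Proof.
  destruct (vpow_geometric_bound y) as (K & C & Hb).
  apply (@ex_series_le R_AbsRing R_CompleteNormedModule _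
           (fun k => K * ((C * Rabs r) ^ k / INR (fact k)))).
  - intros k. change (norm (Rabs (evol_coef y k * r ^ k))) with (Rabs (Rabs (evol_coef y k * r ^ k))).
    pose proof (INR_fact_lt_0 k). pose proof (pow_le (Rabs r) k (Rabs_pos r)).
    unfold evol_coef, Rdiv. rewrite Rabs_Rabsolu, !Rabs_mult, <- RPow_abs, Rpow_mult_distr.
    rewrite (Rabs_right (/ INR (fact k))) by (apply Rle_ge, Rlt_le, Rinv_0_lt_compat; auto).
    replace (K * (C ^ k * Rabs r ^ k * / INR (fact k)))
      with (K * C ^ k * / INR (fact k) * Rabs r ^ k) by ring.
    apply Rmult_le_compat_r; auto. apply Rmult_le_compat_r; auto.
    left; apply Rinv_0_lt_compat; auto.
  - exists (K * exp (C * Rabs r)). apply (is_series_scal_l (V := R_NormedModule) K).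
    eapply is_series_ext; [|apply is_exp_Reals].
    intros k. simpl. rewrite pow_n_pow. unfold scal; simpl; unfold mult; simpl. unfold Rdiv. ring.
Qed.

Lemma is_series_evol t y :
  is_series (fun k => evol_coef y k * t ^ k) (evol s v A t y).
Proof.
  assert (Hex : ex_series (fun k => evol_coef y k * t ^ k))
    by apply ex_series_Rabs, evol_coef_CV_disk.
  unfold evol. apply (is_series_ext (fun k => t ^ k / INR (fact k) * vpow s v A k y)).
  { intros k. change (t ^ k / INR (fact k) * vpow s v A k y = evol_coef y k * t ^ k).
    unfold evol_coef, Rdiv. ring. }
  apply is_series_Reals.
  apply (epsilon_spec (inhabits 0) (infinite_sum (fun k => t ^ k / INR (fact k) * vpow s v A k y))).
  destruct Hex as [l Hl]. exists l. apply is_series_Reals.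
  apply (is_series_ext (fun k => evol_coef y k * t ^ k)); [|exact Hl].
  intros k. change (evol_coef y k * t ^ k = t ^ k / INR (fact k) * vpow s v A k y).
  unfold evol_coef, Rdiv. ring.
Qed.

Lemma evol_PSeries t y : evol s v A t y = PSeries (evol_coef y) t.
Proof. symmetry. apply is_series_unique, is_series_evol. Qed.

Lemma evol_0 y : evol s v A 0 y = v y.
Proof. rewrite evol_PSeries, PSeries_0. unfold evol_coef. simpl. field. Qed.

Lemma is_derive_evol t y :
  is_derive (fun t => evol s v A t y) t (fsum s (fun x => evol s v A t x * A x y)).
Proof.
  apply (is_derive_ext (PSeries (evol_coef y))); [intros; symmetry; apply evol_PSeries|].
  replace (fsum s (fun x => evol s v A t x * A x y)) with (PSeries (PS_derive (evol_coef y)) t).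
  { apply is_derive_PSeries, CV_radius_infinite, evol_coef_CV_disk. }
  apply is_series_unique.
  apply (is_series_ext (fun k => fsum s (fun x => evol_coef x k * t ^ k * A x y))).
  - intros k. unfold PS_derive, evol_coef. simpl vpow.
    assert (INR (fact k) <> 0) by apply INR_fact_neq_0.
    assert (INR (S k) <> 0) by (apply not_0_INR; lia).
    replace (INR (S k) * _ * t ^ k)
      with (fsum s (fun x => vpow s v A k x * A x y) * (t ^ k / INR (fact k)))
      by (rewrite fact_simpl, mult_INR; field; auto).
    rewrite <- fsum_scal_r. apply fsum_ext. intros x _. unfold Rdiv. ring.
  - apply is_series_fsum. intros x _. apply is_series_scal_r, is_series_evol.
Qed.
End MatrixExponential.

(** [d2 s pi mu L t] is [sqrt (chi2 s pi mu L t)] by conversion. *)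
Definition chi2 {X} (s : list X) (pi mu : X -> R) (L : X -> X -> R) (t : R) : R :=
  fsum s (fun y => Rabs (evol s mu L t y / pi y - 1) ^ 2 * pi y).

Section ChiSquare.
Context {X : Type} (s : list X) (pi mu : X -> R) (L : X -> X -> R).

Lemma chi2_nonneg t : (forall y, In y s -> 0 <= pi y) -> 0 <= chi2 s pi mu L t.
Proof. intros Hpi. apply fsum_nonneg. intros y Hy. apply Rmult_le_pos; auto. apply pow2_ge_0. Qed.

Lemma is_derive_chi2 t :
  is_derive (chi2 s pi mu L) t (fsum s (fun y =>
    2 * (evol s mu L t y / pi y - 1) * (fsum s (fun x => evol s mu L t x * L x y) / pi y) * pi y)).
Proof.
  apply (is_derive_ext_R (fun t => fsum s (fun y => (evol s mu L t y / pi y - 1) ^ 2 * pi y))).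
  { intros u. apply fsum_ext. intros. now rewrite pow2_abs. }
  apply is_derive_fsum. intros y _.
  apply (is_derive_ext_R (fun t => pi y * (/ pi y * evol s mu L t y - 1) ^ 2)).
  { intros u. unfold Rdiv. ring. }
  replace (2 * _ * _ * pi y) with (pi y * (INR 2 * (/ pi y * fsum s (fun x => evol s mu L t x * L x y) - 0)
                            * (/ pi y * evol s mu L t y - 1) ^ Init.Nat.pred 2)) by (simpl; unfold Rdiv; ring).
  apply is_derive_scal, (is_derive_pow (fun t => / pi y * evol s mu L t y - 1)).
  apply (is_derive_minus (K := R_AbsRing) (V := R_NormedModule) _ (fun _ => 1)).
  - apply is_derive_scal, is_derive_evol.
  - apply (is_derive_const (K := R_AbsRing) (V := R_NormedModule)).
Qed.

Lemma continuity_pt_chi2 t : continuity_pt (chi2 s pi mu L) t.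
Proof. eapply is_derive_continuity_pt, is_derive_chi2. Qed.
End ChiSquare.

Section FiniteChain.
Context {X : Type} (s : list X) (mu : X -> R) (L : X -> X -> R) (pi : X -> R).
Hypothesis Hc : finite_chain s mu L pi.

Lemma pi_nonneg x : In x s -> 0 <= pi x.
Proof. destruct Hc as (_ & _ & _ & _ & _ & (Hd & _) & _). apply Hd. Qed.

Lemma pi_sum1 : fsum s pi = 1.
Proof. destruct Hc as (_ & _ & _ & _ & _ & ((_ & H) & _)). apply H. Qed.

Lemma pi_stationary y : In y s -> fsum s (fun x => pi x * L x y) = 0.
Proof. destruct Hc as (_ & _ & _ & _ & _ & (_ & Hs)). apply Hs. Qed.

Lemma mu_sum1 : fsum s mu = 1.
Proof. destruct Hc as (_ & _ & (_ & H) & _). apply H. Qed.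

Lemma L_offdiag_nonneg x y : In x s -> In y s -> x <> y -> 0 <= L x y.
Proof. destruct Hc as (_ & _ & _ & (Hg & _) & _). apply Hg. Qed.

Lemma L_row_sum0 x : In x s -> fsum s (fun y => L x y) = 0.
Proof. destruct Hc as (_ & _ & _ & (_ & Hg) & _). apply Hg. Qed.

Lemma pi_pos y : In y s -> 0 < pi y.
Proof.
  revert y. assert (Hback : forall x y, reach s L x y -> In x s -> pi y = 0 -> pi x = 0).
  { induction 1 as [x|x z y Hz Hxz Hzy IH]; intros Hx Hy; auto.
    specialize (IH Hz Hy).
    assert (Hn : forall w, In w s -> 0 <= pi w * L w z).
    { intros w Hw. destruct (classic (w = z)) as [->|Hne]; [rewrite IH; lra|].
      apply Rmult_le_pos; [apply pi_nonneg | apply L_offdiag_nonneg]; auto. }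
    pose proof (fsum_eq0_nonneg s _ Hn (pi_stationary z Hz) x Hx).
    destruct (Rmult_integral _ _ H); [auto | lra]. }
  intros y Hy. destruct (Rle_lt_or_eq_dec 0 (pi y) (pi_nonneg y Hy)) as [|He]; auto.
  exfalso. destruct Hc as (_ & _ & _ & _ & Hirr & _).
  assert (fsum s pi = 0).
  { transitivity (fsum s (fun _ => 0)); [|apply fsum_zero].
    apply fsum_ext. intros x Hx. apply (Hback x y); auto. }
  rewrite pi_sum1 in H. lra.
Qed.

Definition dirichlet (u : X -> R) : R :=
  fsum s (fun x => fsum s (fun y => pi x * L x y * (u y - u x) ^ 2)).

Lemma dirichlet_term_nonneg u x y : In x s -> In y s -> 0 <= pi x * L x y * (u y - u x) ^ 2.
Proof.
  intros Hx Hy. destruct (classic (x = y)) as [<-|Hne].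
  - replace (u x - u x) with 0 by ring. simpl; lra.
  - apply Rmult_le_pos; [apply Rmult_le_pos | apply pow2_ge_0];
      [apply pi_nonneg | apply L_offdiag_nonneg]; auto.
Qed.

Lemma dirichlet_nonneg u : 0 <= dirichlet u.
Proof. do 2 (apply fsum_nonneg; intros). now apply dirichlet_term_nonneg. Qed.

Lemma dirichlet_ge_term u x y : In x s -> In y s ->
  pi x * L x y * (u y - u x) ^ 2 <= dirichlet u.
Proof.
  intros Hx Hy. apply Rle_trans with (fsum s (fun y => pi x * L x y * (u y - u x) ^ 2)).
  - apply (fsum_ge_term s (fun y => pi x * L x y * (u y - u x) ^ 2)); auto.
    intros; now apply dirichlet_term_nonneg.
  - apply (fsum_ge_term s (fun x => fsum s (fun y => pi x * L x y * (u y - u x) ^ 2))); auto.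
    intros; apply fsum_nonneg; intros; now apply dirichlet_term_nonneg.
Qed.

(** Induction along the path: each edge [x -> z] of positive rate is one term of the
    Dirichlet form, and [(a + b)^2 <= 2 a^2 + 2 b^2]. *)
Lemma reach_sq_le_dirichlet x y : reach s L x y -> In x s ->
  exists K, forall u, (u y - u x) ^ 2 <= K * dirichlet u.
Proof.
  induction 1 as [x|x z y Hz Hxz Hzy IH]; intros Hx.
  - exists 0. intros u. replace (u x - u x) with 0 by ring. simpl. lra.
  - destruct (IH Hz) as (K & Hb).
    assert (Hw : 0 < pi x * L x z) by (apply Rmult_lt_0_compat; [apply pi_pos|]; auto).
    exists (2 / (pi x * L x z) + 2 * K). intros u.
    assert (Hedge : (u z - u x) ^ 2 <= / (pi x * L x z) * dirichlet u).
    { pose proof (dirichlet_ge_term u x z Hx Hz).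
      apply (Rmult_le_reg_l (pi x * L x z)); auto.
      rewrite <- Rmult_assoc, Rinv_r; lra. }
    specialize (Hb u). pose proof (pow2_ge_0 ((u z - u x) - (u y - u z))).
    unfold Rdiv. simpl in *. nra.
Qed.

Lemma dirichlet_controls_differences :
  exists K, forall x, In x s -> forall y, In y s -> forall u, (u y - u x) ^ 2 <= K * dirichlet u.
Proof.
  destruct Hc as (_ & _ & _ & _ & Hirr & _).
  apply (finite_uniform_bound s (fun x K => forall y, In y s -> forall u, (u y - u x) ^ 2 <= K * dirichlet u)).
  - intros x K K' H HK y Hy u. pose proof (H y Hy u). pose proof (dirichlet_nonneg u). nra.
  - intros x Hx. apply (finite_uniform_bound s (fun y K => forall u, (u y - u x) ^ 2 <= K * dirichlet u)).
    + intros y K K' H HK u. pose proof (H u). pose proof (dirichlet_nonneg u). nra.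
    + intros y Hy. apply reach_sq_le_dirichlet; auto.
Qed.

Lemma variance_pairs u :
  fsum s (fun x => fsum s (fun y => pi x * pi y * (u x - u y) ^ 2)) =
  2 * (fsum s (fun x => pi x * u x ^ 2) - (fsum s (fun x => pi x * u x)) ^ 2).
Proof.
  rewrite (fsum_ext s _ (fun x => pi x * u x ^ 2 * fsum s pi
             - 2 * (pi x * u x) * fsum s (fun y => pi y * u y) + pi x * fsum s (fun y => pi y * u y ^ 2))).
  - rewrite fsum_plus, fsum_minus, !fsum_scal_r, fsum_scal, pi_sum1. ring.
  - intros x _. rewrite <- !fsum_scal, <- fsum_minus, <- fsum_plus. apply fsum_ext. intros; ring.
Qed.

Lemma poincare : exists K, 0 < K /\ forall u,
  fsum s (fun x => pi x * u x ^ 2) - (fsum s (fun x => pi x * u x)) ^ 2 <= K * dirichlet u.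
Proof.
  destruct dirichlet_controls_differences as [K HK].
  exists (Rabs K + 1). split; [pose proof (Rabs_pos K); lra|]. intros u.
  pose proof (dirichlet_nonneg u). pose proof (Rle_abs K).
  assert (Hpairs : fsum s (fun x => fsum s (fun y => pi x * pi y * (u x - u y) ^ 2))
                   <= K * dirichlet u).
  { apply Rle_trans with (fsum s (fun x => fsum s (fun y => pi x * pi y * (K * dirichlet u)))).
    - do 2 (apply fsum_le; intros). apply Rmult_le_compat_l.
      + apply Rmult_le_pos; apply pi_nonneg; auto.
      + replace ((u x - u x0) ^ 2) with ((u x0 - u x) ^ 2) by ring. auto.
    - rewrite (fsum_ext s _ (fun x => pi x * (K * dirichlet u))).
      + rewrite fsum_scal_r, pi_sum1. lra.
      + intros x _. rewrite (fsum_ext s _ (fun y => pi y * (pi x * (K * dirichlet u)))) by (intros; ring).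
        rewrite fsum_scal_r, pi_sum1. ring. }
  rewrite variance_pairs in Hpairs.
  pose proof (Rmult_le_compat_r _ _ _ (dirichlet_nonneg u) (Rle_abs K)).
  pose proof (Rabs_pos K). nra.
Qed.

Lemma dirichlet_identity u :
  fsum s (fun y => u y * fsum s (fun x => pi x * u x * L x y)) = - dirichlet u / 2.
Proof.
  assert (Hstat : fsum s (fun x => fsum s (fun y => pi x * L x y * u y ^ 2)) = 0).
  { rewrite fsum_swap. transitivity (fsum s (fun _ : X => 0)); [|apply fsum_zero].
    apply fsum_ext. intros y Hy. rewrite fsum_scal_r, pi_stationary; auto; ring. }
  assert (Hrow : fsum s (fun x => fsum s (fun y => pi x * L x y * u x ^ 2)) = 0).
  { transitivity (fsum s (fun _ : X => 0)); [|apply fsum_zero].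
    apply fsum_ext. intros x Hx.
    rewrite (fsum_ext s _ (fun y => pi x * u x ^ 2 * L x y)) by (intros; ring).
    rewrite fsum_scal, L_row_sum0; auto; ring. }
  assert (Hcross : fsum s (fun y => u y * fsum s (fun x => pi x * u x * L x y)) =
                   fsum s (fun x => fsum s (fun y => pi x * L x y * u x * u y))).
  { rewrite fsum_swap. apply fsum_ext. intros y _. rewrite <- fsum_scal. apply fsum_ext; intros; ring. }
  assert (Hexpand : dirichlet u = fsum s (fun x => fsum s (fun y => pi x * L x y * u y ^ 2)
             - 2 * fsum s (fun y => pi x * L x y * u x * u y)
             + fsum s (fun y => pi x * L x y * u x ^ 2))).
  { apply fsum_ext. intros x _. rewrite <- fsum_scal, <- fsum_minus, <- fsum_plus.
    apply fsum_ext. intros; ring. }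
  rewrite Hcross, Hexpand, fsum_plus, fsum_minus, fsum_scal, Hstat, Hrow. field.
Qed.

Lemma evol_mass t : fsum s (fun y => evol s mu L t y) = 1.
Proof.
  rewrite <- mu_sum1. transitivity (fsum s (fun y => evol s mu L 0 y)).
  - apply (is_derive_0_const (fun t => fsum s (fun y => evol s mu L t y))). intros u.
    replace 0 with (fsum s (fun y => fsum s (fun x => evol s mu L u x * L x y))).
    + apply is_derive_fsum. intros y _. apply is_derive_evol.
    + rewrite fsum_swap. transitivity (fsum s (fun _ : X => 0)); [|apply fsum_zero].
      apply fsum_ext. intros x Hx. rewrite fsum_scal, L_row_sum0; auto; ring.
  - apply fsum_ext. intros; apply evol_0.
Qed.

Definition density (t : R) (y : X) : R := evol s mu L t y / pi y.

Lemma density_mean t : fsum s (fun x => pi x * density t x) = 1.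
Proof.
  rewrite <- (evol_mass t). apply fsum_ext. intros x Hx. unfold density.
  pose proof (pi_pos x Hx). field. lra.
Qed.

Lemma chi2_variance t :
  chi2 s pi mu L t = fsum s (fun x => pi x * density t x ^ 2) - (fsum s (fun x => pi x * density t x)) ^ 2.
Proof.
  rewrite density_mean. unfold chi2.
  rewrite (fsum_ext s _ (fun x => pi x * density t x ^ 2 - 2 * (pi x * density t x) + pi x)).
  - rewrite fsum_plus, fsum_minus, fsum_scal, density_mean, pi_sum1. ring.
  - intros x Hx. rewrite pow2_abs. fold (density t x). ring.
Qed.

Lemma is_derive_chi2_dirichlet t : is_derive (chi2 s pi mu L) t (- dirichlet (density t)).
Proof.
  eapply is_derive_ext_R; [reflexivity|].
  replace (- dirichlet (density t)) with (fsum s (fun y =>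
    2 * (evol s mu L t y / pi y - 1) * (fsum s (fun x => evol s mu L t x * L x y) / pi y) * pi y)).
  { apply is_derive_chi2. }
  set (u := density t).
  assert (Hrows : fsum s (fun y => fsum s (fun x => pi x * u x * L x y)) = 0).
  { rewrite fsum_swap. transitivity (fsum s (fun _ : X => 0)); [|apply fsum_zero].
    apply fsum_ext. intros x Hx. rewrite fsum_scal, L_row_sum0; auto; ring. }
  transitivity (2 * fsum s (fun y => u y * fsum s (fun x => pi x * u x * L x y))
                - 2 * fsum s (fun y => fsum s (fun x => pi x * u x * L x y))).
  - rewrite <- !fsum_scal, <- fsum_minus. apply fsum_ext. intros y Hy.
    rewrite (fsum_ext s (fun x => evol s mu L t x * L x y) (fun x => pi x * u x * L x y)).
    + unfold u, density. pose proof (pi_pos y Hy). field. lra.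
    + intros x Hx. unfold u, density. pose proof (pi_pos x Hx). field. lra.
  - rewrite dirichlet_identity, Hrows. field.
Qed.

Lemma chi2_nonincreasing a b : a <= b -> chi2 s pi mu L b <= chi2 s pi mu L a.
Proof.
  apply is_derive_nonpos_nonincr with (f' := fun t => - dirichlet (density t)).
  - apply is_derive_chi2_dirichlet.
  - intros t _. pose proof (dirichlet_nonneg (density t)). lra.
Qed.

Lemma chi2_exp_decay : exists c, 0 < c /\
  forall t, 0 <= t -> chi2 s pi mu L t <= exp (- c * t) * chi2 s pi mu L 0.
Proof.
  destruct poincare as (K & HK & Hpoinc). exists (/ K).
  split; [now apply Rinv_0_lt_compat|].
  apply (gronwall _ (fun t => - dirichlet (density t))); [apply is_derive_chi2_dirichlet|].
  intros t. specialize (Hpoinc (density t)). rewrite <- chi2_variance in Hpoinc.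
  apply Rle_trans with (- (/ K * (K * dirichlet (density t)))).
  - rewrite <- Rmult_assoc, Rinv_l, Rmult_1_l by lra. lra.
  - pose proof (Rinv_0_lt_compat K HK). nra.
Qed.

Lemma chi2_eventually_le d : 0 < d -> exists T, 0 <= T /\ forall t, T <= t -> chi2 s pi mu L t <= d.
Proof.
  intros Hd. destruct chi2_exp_decay as (c & Hcpos & Hdecay).
  set (W0 := chi2 s pi mu L 0).
  assert (HW0 : 0 <= W0) by (apply chi2_nonneg, pi_nonneg).
  assert (Hcd : 0 < c * d) by nra.
  assert (HT : 0 <= W0 / (c * d)) by (apply Rmult_le_pos; [lra | left; now apply Rinv_0_lt_compat]).
  exists (W0 / (c * d)). split; auto. intros t Ht.
  assert (Hct : W0 <= c * t * d).
  { apply (Rmult_le_compat_l (c * d)) in Ht; [|lra].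
    replace (c * d * (W0 / (c * d))) with W0 in Ht by (field; lra). lra. }
  eapply Rle_trans; [apply Hdecay; lra|].
  pose proof (exp_pos (c * t)).
  pose proof (Rmult_le_compat_r d _ _ (Rlt_le _ _ Hd) (exp_ineq1_le (c * t))).
  replace (- c * t) with (- (c * t)) by ring. rewrite exp_Ropp.
  apply (Rmult_le_reg_l (exp (c * t))); auto.
  rewrite <- Rmult_assoc, Rinv_r, Rmult_1_l by lra. fold W0. nra.
Qed.
End FiniteChain.

Lemma in_prod_enum_cons a ms x : In x (prod_enum (a :: ms)) ->
  exists k x', x = k :: x' /\ (k < a)%nat /\ In x' (prod_enum ms).
Proof.
  simpl. intros H. apply in_flat_map in H as (k & Hk & H). apply in_map_iff in H as (x' & <- & Hx').
  apply in_seq in Hk. exists k, x'. repeat split; auto; lia.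
Qed.

Lemma prod_enum_length ms x : In x (prod_enum ms) -> length x = length ms.
Proof.
  revert x; induction ms; intros x H.
  - simpl in H. now destruct H as [<-|[]].
  - destruct (in_prod_enum_cons _ _ _ H) as (k & x' & -> & _ & Hx'). simpl; f_equal; auto.
Qed.

Lemma prod_enum_nth_lt ms x i : In x (prod_enum ms) -> (i < length ms)%nat ->
  (nth i x 0 < nth i ms 0)%nat.
Proof.
  revert x i; induction ms; intros x i Hx Hi; simpl in Hi; [lia|].
  destruct (in_prod_enum_cons _ _ _ Hx) as (k & x' & -> & Hk & Hx').
  destruct i; simpl; auto. apply IHms; auto; lia.
Qed.

Lemma fsum_prod_enum_cons a ms (F : list nat -> R) :
  fsum (prod_enum (a :: ms)) F = fsum (seq 0 a) (fun k => fsum (prod_enum ms) (fun x => F (k :: x))).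
Proof. simpl. rewrite fsum_flat_map. apply fsum_ext. intros. apply fsum_map. Qed.

Lemma fsum_prod_enum_fprod ms (f : nat -> nat -> R) :
  fsum (prod_enum ms) (fun x => fprod (seq 0 (length ms)) (fun i => f i (nth i x 0%nat))) =
  fprod (seq 0 (length ms)) (fun i => fsum (seq 0 (nth i ms 0%nat)) (f i)).
Proof.
  revert f; induction ms as [|a ms IH]; intros f; [simpl; lra|].
  rewrite fsum_prod_enum_cons. simpl length. rewrite fprod_seq_S. simpl nth.
  rewrite <- (IH (fun i => f (S i))), <- fsum_scal_r. apply fsum_ext. intros k _.
  rewrite <- fsum_scal. apply fsum_ext. intros x _. now rewrite fprod_seq_S.
Qed.

Lemma fsum_prod_enum_diag ms (G : list nat -> R) y : In y (prod_enum ms) ->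
  fsum (prod_enum ms) (fun x => G x * fprod (seq 0 (length ms))
     (fun j => if Nat.eqb (nth j x 0%nat) (nth j y 0%nat) then 1 else 0)) = G y.
Proof.
  revert G y; induction ms as [|a ms IH]; intros G y Hy.
  - simpl in *. destruct Hy as [<-|[]]. simpl. lra.
  - destruct (in_prod_enum_cons _ _ _ Hy) as (k0 & y' & -> & Hk0 & Hy').
    rewrite fsum_prod_enum_cons. simpl length.
    rewrite <- (IH (fun x => G (k0 :: x)) y' Hy').
    rewrite <- (fsum_indicator (seq 0 a) k0 (fun k => fsum (prod_enum ms) (fun x => G (k :: x) *
      fprod (seq 0 (length ms)) (fun j => if Nat.eqb (nth j x 0%nat) (nth j y' 0%nat) then 1 else 0))))
      by (apply seq_NoDup || (apply in_seq; lia)).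
    apply fsum_ext. intros k _. destruct (Nat.eqb_spec k k0) as [->|Hne].
    + apply fsum_ext. intros x _. rewrite fprod_seq_S. simpl nth. rewrite Nat.eqb_refl. ring.
    + transitivity (fsum (prod_enum ms) (fun _ => 0)); [|apply fsum_zero].
      apply fsum_ext. intros x _. rewrite fprod_seq_S. simpl nth.
      destruct (Nat.eqb_spec k k0); [lia | ring].
Qed.

Fixpoint upd (x : list nat) (i k : nat) : list nat :=
  match x, i with
  | [], _ => []
  | _ :: x', O => k :: x'
  | a :: x', S i' => a :: upd x' i' k
  end.

Lemma nth_upd x i k j : (i < length x)%nat ->
  nth j (upd x i k) 0%nat = if Nat.eqb j i then k else nth j x 0%nat.
Proof.
  revert i j; induction x; intros i j Hi; simpl in Hi; [lia|].
  destruct i, j; simpl; auto. apply IHx; lia.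
Qed.

Lemma fsum_prod_enum_offdiag ms y i (F : list nat -> R) :
  In y (prod_enum ms) -> (i < length ms)%nat ->
  fsum (prod_enum ms) (fun x => F x * fprod (seq 0 (length ms))
     (fun j => if Nat.eqb j i then 1 else if Nat.eqb (nth j x 0%nat) (nth j y 0%nat) then 1 else 0)) =
  fsum (seq 0 (nth i ms 0%nat)) (fun k => F (upd y i k)).
Proof.
  revert y i F; induction ms as [|a ms IH]; intros y i F Hy Hi; simpl in Hi; [lia|].
  destruct (in_prod_enum_cons _ _ _ Hy) as (k0 & y' & -> & Hk0 & Hy').
  rewrite fsum_prod_enum_cons. simpl length. destruct i as [|i']; simpl nth; simpl upd.
  - apply fsum_ext. intros k _.
    rewrite <- (fsum_prod_enum_diag ms (fun x => F (k :: x)) y' Hy').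
    apply fsum_ext. intros x _. rewrite fprod_seq_S. simpl. ring.
  - rewrite <- (IH y' i' (fun x => F (k0 :: x)) Hy') by lia.
    rewrite <- (fsum_indicator (seq 0 a) k0 (fun k => fsum (prod_enum ms) (fun x => F (k :: x) *
      fprod (seq 0 (length ms)) (fun j => if Nat.eqb j i' then 1
        else if Nat.eqb (nth j x 0%nat) (nth j y' 0%nat) then 1 else 0))))
      by (apply seq_NoDup || (apply in_seq; lia)).
    apply fsum_ext. intros k _. destruct (Nat.eqb_spec k k0) as [->|Hne].
    + apply fsum_ext. intros x _. rewrite fprod_seq_S. simpl. rewrite Nat.eqb_refl. ring.
    + transitivity (fsum (prod_enum ms) (fun _ => 0)); [|apply fsum_zero].
      apply fsum_ext. intros x _. rewrite fprod_seq_S. simpl.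
      destruct (Nat.eqb_spec k k0); [lia | ring].
Qed.

Lemma chi2_sum_sq_ratio {X} (s : list X) (pi e : X -> R) :
  (forall y, In y s -> pi y <> 0) -> fsum s e = 1 -> fsum s pi = 1 ->
  fsum s (fun y => Rabs (e y / pi y - 1) ^ 2 * pi y) = fsum s (fun y => e y ^ 2 / pi y) - 1.
Proof.
  intros Hpi He Hp.
  rewrite (fsum_ext s _ (fun y => e y ^ 2 / pi y - 2 * e y + pi y)).
  - rewrite fsum_plus, fsum_minus, fsum_scal, He, Hp. ring.
  - intros y Hy. rewrite pow2_abs. specialize (Hpi y Hy). field. auto.
Qed.

Section ProductChain.
Variables (ell : nat -> nat) (m : nat -> nat -> nat)
  (mu pi : nat -> nat -> nat -> R) (L : nat -> nat -> nat -> nat -> R)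
  (p : nat -> nat -> R) (n : nat).

Let ms := map (m n) (seq 0 (ell n)).

Lemma ms_length : length ms = ell n.
Proof. unfold ms. now rewrite length_map, length_seq. Qed.

Lemma ms_nth i : (i < ell n)%nat -> nth i ms 0%nat = m n i.
Proof.
  intros Hi. unfold ms. rewrite nth_indep with (d' := m n 0%nat).
  - rewrite map_nth, seq_nth; auto.
  - now rewrite length_map, length_seq.
Qed.

Lemma prod_space_length y : In y (prod_space ell m n) -> length y = ell n.
Proof. intros H. rewrite (prod_enum_length ms y H). apply ms_length. Qed.

Lemma prod_space_nth y i : In y (prod_space ell m n) -> (i < ell n)%nat ->
  In (nth i y 0%nat) (seq 0 (m n i)).
Proof.
  intros Hy Hi. apply in_seq. rewrite <- ms_nth by auto.
  pose proof (prod_enum_nth_lt ms y i Hy). rewrite ms_length in H. specialize (H Hi). lia.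
Qed.

Lemma fsum_prod_space_fprod (f : nat -> nat -> R) :
  fsum (prod_space ell m n) (fun y => fprod (seq 0 (ell n)) (fun i => f i (nth i y 0%nat))) =
  fprod (seq 0 (ell n)) (fun i => fsum (seq 0 (m n i)) (f i)).
Proof.
  unfold prod_space. fold ms. pose proof (fsum_prod_enum_fprod ms f) as H.
  rewrite ms_length in H. rewrite H. apply fprod_ext. intros i Hi. apply in_seq in Hi.
  now rewrite ms_nth by lia.
Qed.

Lemma fsum_mul_prod_gen (F : list nat -> R) y : In y (prod_space ell m n) ->
  fsum (prod_space ell m n) (fun x => F x * prod_gen ell p L n x y) =
  fsum (seq 0 (ell n)) (fun i =>
    p n i * fsum (seq 0 (m n i)) (fun k => F (upd y i k) * L n i k (nth i y 0%nat))).
Proof.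
  intros Hy. pose proof (prod_space_length y Hy) as Hlen. unfold prod_gen.
  rewrite (fsum_ext _ _ (fun x => fsum (seq 0 (ell n)) (fun i =>
     (p n i * F x * L n i (nth i x 0%nat) (nth i y 0%nat)) *
     fprod (seq 0 (ell n)) (fun j => if Nat.eqb j i then 1
       else if Nat.eqb (nth j x 0%nat) (nth j y 0%nat) then 1 else 0))))
    by (intros; rewrite <- fsum_scal; apply fsum_ext; intros; ring).
  rewrite fsum_swap. apply fsum_ext. intros i Hi. apply in_seq in Hi.
  pose proof (fsum_prod_enum_offdiag ms y i
    (fun x => p n i * F x * L n i (nth i x 0%nat) (nth i y 0%nat)) Hy) as Hoff.
  rewrite ms_length, ms_nth in Hoff by lia. unfold prod_space. fold ms. rewrite Hoff by lia.
  rewrite <- fsum_scal. apply fsum_ext. intros k _.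
  rewrite nth_upd, Nat.eqb_refl by lia. ring.
Qed.

Definition prod_evol (t : R) (y : list nat) : R :=
  fprod (seq 0 (ell n)) (fun i => evol (seq 0 (m n i)) (mu n i) (L n i) (p n i * t) (nth i y 0%nat)).

Lemma is_derive_prod_evol t y : In y (prod_space ell m n) ->
  is_derive (fun t => prod_evol t y) t
    (fsum (prod_space ell m n) (fun x => prod_evol t x * prod_gen ell p L n x y)).
Proof.
  intros Hy. pose proof (prod_space_length y Hy) as Hlen.
  set (E i tau k := evol (seq 0 (m n i)) (mu n i) (L n i) tau k).
  rewrite fsum_mul_prod_gen by auto.
  replace (fsum (seq 0 (ell n)) _) with (fsum (seq 0 (ell n)) (fun i =>
      p n i * fsum (seq 0 (m n i)) (fun k => E i (p n i * t) k * L n i k (nth i y 0%nat)) *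
      fprod (seq 0 (ell n)) (fun j => if Nat.eqb j i then 1 else E j (p n j * t) (nth j y 0%nat)))).
  - apply (is_derive_fprod (seq 0 (ell n)) (fun i t => E i (p n i * t) (nth i y 0%nat))).
    + apply seq_NoDup.
    + intros i _. apply (is_derive_dilate (fun tau => E i tau (nth i y 0%nat))), is_derive_evol.
  - apply fsum_ext. intros i Hi. apply in_seq in Hi.
    set (rest := fprod (seq 0 (ell n)) (fun j => if Nat.eqb j i then 1 else E j (p n j * t) (nth j y 0%nat))).
    assert (Hsplit : forall k, prod_evol t (upd y i k) = E i (p n i * t) k * rest).
    { intros k. unfold prod_evol. rewrite (fprod_split _ _ i) by (apply seq_NoDup || (apply in_seq; lia)).
      rewrite nth_upd, Nat.eqb_refl by lia. f_equal. apply fprod_ext. intros j _.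
      destruct (Nat.eqb_spec j i); auto. rewrite nth_upd by lia. now destruct (Nat.eqb_spec j i). }
    rewrite (fsum_ext _ (fun k => prod_evol t (upd y i k) * L n i k (nth i y 0%nat))
               (fun k => E i (p n i * t) k * L n i k (nth i y 0%nat) * rest))
      by (intros; rewrite Hsplit; ring).
    rewrite fsum_scal_r. ring.
Qed.

(** Both sides solve the forward equation of the product generator with the same
    initial value. *)
Lemma evol_prod t y : 0 <= t -> In y (prod_space ell m n) ->
  evol (prod_space ell m n) (prod_dist ell mu n) (prod_gen ell p L n) t y = prod_evol t y.
Proof.
  intros Ht Hy.
  apply (forward_equation_unique (prod_space ell m n) (prod_gen ell p L n)
    (evol (prod_space ell m n) (prod_dist ell mu n) (prod_gen ell p L n)) prod_evol); auto.
  - intros; apply is_derive_evol.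
  - intros; now apply is_derive_prod_evol.
  - intros z _. rewrite evol_0. unfold prod_evol, prod_dist. apply fprod_ext. intros i _.
    now rewrite Rmult_0_r, evol_0.
Qed.

Hypothesis Hchain : forall i, (i < ell n)%nat ->
  finite_chain (seq 0 (m n i)) (mu n i) (L n i) (pi n i).

Lemma prod_dist_pi_pos y : In y (prod_space ell m n) -> 0 < prod_dist ell pi n y.
Proof.
  intros Hy. apply fprod_pos. intros i Hi. apply in_seq in Hi.
  apply (pi_pos _ _ _ _ (Hchain i ltac:(lia))). apply prod_space_nth; auto; lia.
Qed.

Lemma chi2_prod t : 0 <= t ->
  chi2 (prod_space ell m n) (prod_dist ell pi n) (prod_dist ell mu n) (prod_gen ell p L n) t =
  fprod (seq 0 (ell n)) (fun i =>
    1 + chi2 (seq 0 (m n i)) (pi n i) (mu n i) (L n i) (p n i * t)) - 1.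
Proof.
  intros Ht.
  set (E i k := evol (seq 0 (m n i)) (mu n i) (L n i) (p n i * t) k).
  assert (Hpi : forall i, In i (seq 0 (ell n)) -> fsum (seq 0 (m n i)) (pi n i) = 1)
    by (intros i Hi; apply in_seq in Hi; apply (pi_sum1 _ _ _ _ (Hchain i ltac:(lia)))).
  assert (Hmass : forall i, In i (seq 0 (ell n)) -> fsum (seq 0 (m n i)) (E i) = 1)
    by (intros i Hi; apply in_seq in Hi; apply (evol_mass _ _ _ _ (Hchain i ltac:(lia)))).
  unfold chi2. rewrite chi2_sum_sq_ratio.
  - rewrite (fprod_ext _ _ (fun i => fsum (seq 0 (m n i)) (fun k => E i k ^ 2 / pi n i k))).
    + rewrite <- fsum_prod_space_fprod. f_equal. apply fsum_ext. intros y Hy.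
      rewrite evol_prod by auto. unfold prod_evol, prod_dist, Rdiv.
      rewrite fprod_mult, fprod_inv.
      { simpl. rewrite Rmult_1_r, <- fprod_mult. f_equal. apply fprod_ext. intros. unfold E. ring. }
      intros i Hi. apply in_seq in Hi. apply Rgt_not_eq, (pi_pos _ _ _ _ (Hchain i ltac:(lia))).
      apply prod_space_nth; auto; lia.
    + intros i Hi. pose proof (Hmass i Hi). pose proof (Hpi i Hi). apply in_seq in Hi.
      rewrite chi2_sum_sq_ratio; auto; [unfold E; ring|].
      intros k Hk. apply Rgt_not_eq, (pi_pos _ _ _ _ (Hchain i ltac:(lia)) k Hk).
  - intros y Hy. apply Rgt_not_eq, prod_dist_pi_pos, Hy.
  - rewrite (fsum_ext _ _ (prod_evol t)) by (intros; apply evol_prod; auto).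
    change (fsum (prod_space ell m n) (fun y => fprod (seq 0 (ell n)) (fun i => E i (nth i y 0%nat))) = 1).
    rewrite fsum_prod_space_fprod, (fprod_ext _ _ _ Hmass). apply fprod_const1.
  - unfold prod_dist. rewrite fsum_prod_space_fprod, (fprod_ext _ _ _ Hpi). apply fprod_const1.
Qed.
End ProductChain.

Lemma continuity_pt_gt_nbhd (f : R -> R) T eps : continuity_pt f T -> eps < f T ->
  exists d, 0 < d /\ forall t, Rabs (t - T) < d -> eps < f t.
Proof.
  intros Hc HfT. destruct (Hc (f T - eps)) as (d & Hd & Hnear); [lra|].
  exists d. split; auto. intros t Ht.
  destruct (Req_dec t T) as [->|Hne]; auto.
  assert (Hdist : R_dist (f t) (f T) < f T - eps) by (apply Hnear; repeat split; auto).
  unfold R_dist in Hdist. apply Rabs_def2 in Hdist. lra.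
Qed.

Lemma min_time_spec (f : R -> R) eps :
  (exists t0, 0 <= t0 /\ f t0 <= eps) -> (forall T, 0 <= T -> continuity_pt f T) ->
  0 <= min_time f eps /\ f (min_time f eps) <= eps /\
  forall t, 0 <= t -> f t <= eps -> min_time f eps <= t.
Proof.
  intros (t0 & Ht0 & Hf0) Hcont. unfold min_time. apply epsilon_spec.
  (* The infimum of [{t >= 0 | f t <= eps}] is [- sup {- t | ...}]. *)
  set (E x := 0 <= - x /\ f (- x) <= eps).
  destruct (completeness E) as [M [Hub Hleast]].
  { exists 0. intros x [Hx _]. lra. }
  { exists (- t0). unfold E. rewrite Ropp_involutive. auto. }
  assert (HT0 : 0 <= - M) by (enough (M <= 0) by lra; apply Hleast; intros x [Hx _]; lra).
  assert (Hlow : forall t, 0 <= t -> f t <= eps -> - M <= t).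
  { intros t Ht Hft. enough (- t <= M) by lra. apply Hub. unfold E. now rewrite Ropp_involutive. }
  exists (- M). repeat split; auto.
  destruct (Rle_dec (f (- M)) eps) as [|Hgt]; auto. exfalso.
  destruct (continuity_pt_gt_nbhd f (- M) eps (Hcont _ HT0)) as (d & Hd & Hnear); [lra|].
  enough (M <= M - d) by lra. apply Hleast. intros x [Hx Hfx].
  destruct (Rle_dec x (M - d)) as [|Hc]; auto. exfalso.
  pose proof (Hlow (- x) Hx Hfx). pose proof (Hub x (conj Hx Hfx)).
  assert (eps < f (- x)) by (apply Hnear; rewrite Rabs_pos_eq; lra). lra.
Qed.

Section Sandwich.
Variables (S D : nat -> R -> R).
Hypothesis Hsandwich : forall n t, 0 <= t ->
  0 <= S n t /\ S n t <= D n t ^ 2 /\ D n t ^ 2 <= exp (S n t) - 1 /\ 0 <= D n t.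

Lemma Un_cv_sum_of_dist (u : nat -> R) : (forall n, 0 <= u n) ->
  Un_cv (fun n => D n (u n)) 0 -> Un_cv (fun n => S n (u n)) 0.
Proof.
  intros Hu Hcv e He. destruct (Hcv (sqrt e) (sqrt_lt_R0 e He)) as [N HN].
  exists N. intros k Hk. specialize (HN k Hk).
  destruct (Hsandwich k (u k) (Hu k)) as (HS0 & HSD & _ & HD0).
  unfold R_dist in *. rewrite Rminus_0_r, Rabs_right in * by lra.
  assert (D k (u k) * D k (u k) < sqrt e * sqrt e) by (apply Rmult_le_0_lt_compat; lra).
  rewrite sqrt_sqrt in H by lra. simpl in HSD. lra.
Qed.

Lemma Un_cv_dist_of_sum (u : nat -> R) : (forall n, 0 <= u n) ->
  Un_cv (fun n => S n (u n)) 0 -> Un_cv (fun n => D n (u n)) 0.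
Proof.
  intros Hu Hcv e He.
  assert (He' : 0 < ln (1 + e ^ 2))
    by (rewrite <- ln_1; apply ln_increasing; [lra | pose proof (pow_lt e 2 He); lra]).
  destruct (Hcv _ He') as [N HN]. exists N. intros k Hk. specialize (HN k Hk).
  destruct (Hsandwich k (u k) (Hu k)) as (HS0 & _ & HDS & HD0).
  unfold R_dist in *. rewrite Rminus_0_r, Rabs_right in * by lra.
  pose proof (exp_increasing _ _ HN) as Hexp. rewrite exp_ln in Hexp by (pose proof (pow2_ge_0 e); lra).
  destruct (Rlt_or_le (D k (u k)) e) as [|Hge]; auto.
  pose proof (pow_incr e (D k (u k)) 2 (conj (Rlt_le _ _ He) Hge)). lra.
Qed.

Lemma cv_infty_sum_of_dist (u : nat -> R) : (forall n, 0 <= u n) ->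
  cv_infty (fun n => D n (u n)) -> cv_infty (fun n => S n (u n)).
Proof.
  intros Hu Hcv M. destruct (Hcv (exp (Rabs M))) as [N HN]. exists N. intros k Hk.
  specialize (HN k Hk). destruct (Hsandwich k (u k) (Hu k)) as (_ & _ & HDS & HD0).
  pose proof (exp_ineq1_le (Rabs M)). pose proof (Rabs_pos M). pose proof (Rle_abs M).
  assert (exp (Rabs M) < exp (S k (u k))) by (simpl in *; nra).
  apply exp_lt_inv in H2. lra.
Qed.

Lemma cv_infty_dist_of_sum (u : nat -> R) : (forall n, 0 <= u n) ->
  cv_infty (fun n => S n (u n)) -> cv_infty (fun n => D n (u n)).
Proof.
  intros Hu Hcv M. destruct (Hcv (M ^ 2)) as [N HN]. exists N. intros k Hk.
  specialize (HN k Hk). destruct (Hsandwich k (u k) (Hu k)) as (_ & HSD & _ & HD0).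
  destruct (Rlt_or_le M 0); [lra|].
  destruct (Rlt_or_le M (D k (u k))) as [|Hle]; auto.
  pose proof (pow_incr _ _ 2 (conj HD0 Hle)). lra.
Qed.

Lemma min_time_sandwich n eps : 0 < eps ->
  (forall T, 0 <= T -> continuity_pt (S n) T) -> (forall T, 0 <= T -> continuity_pt (D n) T) ->
  (forall d, 0 < d -> exists t, 0 <= t /\ S n t <= d) ->
  min_time (D n) (sqrt (exp eps - 1)) <= min_time (S n) eps <= min_time (D n) (sqrt eps).
Proof.
  intros He HScont HDcont HSsmall.
  assert (HDle : forall t c, 0 <= t -> D n t ^ 2 <= c -> D n t <= sqrt c).
  { intros t c Ht Hc. destruct (Hsandwich n t Ht) as (_ & _ & _ & HD0).
    rewrite <- (sqrt_pow2 (D n t)) by auto. now apply sqrt_le_1_alt. }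
  destruct (min_time_spec (S n) eps) as (HT1 & HST1 & HminS); auto.
  set (T1 := min_time (S n) eps) in *.
  assert (HDT1 : D n T1 <= sqrt (exp eps - 1)).
  { apply HDle; auto. destruct (Hsandwich n T1 HT1) as (_ & _ & HDS & _).
    assert (exp (S n T1) <= exp eps) by (destruct HST1 as [Hlt| ->]; [left; now apply exp_increasing | lra]).
    lra. }
  split.
  - destruct (min_time_spec (D n) (sqrt (exp eps - 1))) as (_ & _ & HminD); eauto.
  - destruct (min_time_spec (D n) (sqrt eps)) as (HT2 & HDT2 & _); auto.
    + destruct (HSsmall (ln (1 + eps))) as (t & Ht & HSt).
      { rewrite <- ln_1. apply ln_increasing; lra. }
      exists t. split; auto. apply HDle; auto.
      destruct (Hsandwich n t Ht) as (_ & _ & HDS & _).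
      assert (exp (S n t) <= 1 + eps).
      { rewrite <- (exp_ln (1 + eps)) by lra.
        destruct HSt as [Hlt| ->]; [left; now apply exp_increasing | lra]. }
      lra.
    + apply HminS; auto.
      destruct (Hsandwich n _ HT2) as (_ & HSD & _ & HD0).
      pose proof (pow_incr _ _ 2 (conj HD0 HDT2)). rewrite pow2_sqrt in H by lra. lra.
Qed.

Hypothesis HSmono : forall n a b, 0 <= a <= b -> S n b <= S n a.

Lemma L2_cutoff_iff_sum :
  L2_cutoff D <->
  exists tn : nat -> R, (forall n, 0 < tn n) /\
    (forall a, 1 < a -> Un_cv (fun n => S n (a * tn n)) 0) /\
    (forall a, 0 < a < 1 -> cv_infty (fun n => S n (a * tn n))).
Proof.
  split.
  - intros (tn & Htn & Hcut). exists tn. repeat split; auto.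
    + (* [(1 + a') t_n <= a t_n] for [a' = min (a - 1) (1/2)]; conclude by monotonicity *)
      intros a Ha. set (a' := Rmin (a - 1) (1 / 2)).
      assert (Ha' : 0 < a' < 1) by (unfold a'; split; [apply Rmin_glb_lt | pose proof (Rmin_r (a - 1) (1 / 2))]; lra).
      assert (Hle : forall n, (1 + a') * tn n <= a * tn n).
      { intros n. apply Rmult_le_compat_r; [pose proof (Htn n); lra|].
        pose proof (Rmin_l (a - 1) (1 / 2)). unfold a' in *. lra. }
      assert (Hpos : forall n, 0 <= (1 + a') * tn n) by (intros n; pose proof (Htn n); nra).
      pose proof (Un_cv_sum_of_dist _ Hpos (proj1 (Hcut a' Ha'))) as Hcv.
      intros e He. destruct (Hcv e He) as [N HN]. exists N. intros k Hk. specialize (HN k Hk).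
      pose proof (HSmono k _ _ (conj (Hpos k) (Hle k))).
      pose proof (proj1 (Hsandwich k (a * tn k) ltac:(pose proof (Hpos k); pose proof (Hle k); lra))).
      pose proof (proj1 (Hsandwich k _ (Hpos k))).
      unfold R_dist in *. rewrite Rminus_0_r, Rabs_right in * by lra. lra.
    + intros a Ha. pose proof (proj2 (Hcut (1 - a) ltac:(lra))) as Hinf.
      apply cv_infty_sum_of_dist; [intros n; pose proof (Htn n); nra|].
      intros M. destruct (Hinf M) as [N HN]. exists N. intros k Hk.
      replace (a * tn k) with ((1 - (1 - a)) * tn k) by ring. auto.
  - intros (tn & Htn & H1 & H2). exists tn. split; auto. intros a Ha. split.
    + apply Un_cv_dist_of_sum; [intros n; pose proof (Htn n); nra | apply H1; lra].
    + apply cv_infty_dist_of_sum; [intros n; pose proof (Htn n); nra | apply H2; lra].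
Qed.
End Sandwich.

Section ProductFamily.
Variables (ell : nat -> nat) (m : nat -> nat -> nat)
  (mu pi : nat -> nat -> nat -> R) (L : nat -> nat -> nat -> nat -> R)
  (p : nat -> nat -> R).
Hypothesis Hchain : forall n i, (i < ell n)%nat ->
  finite_chain (seq 0 (m n i)) (mu n i) (L n i) (pi n i).
Hypothesis Hp : forall n i, (i < ell n)%nat -> 0 < p n i.

Let chi2_comp n i tau := chi2 (seq 0 (m n i)) (pi n i) (mu n i) (L n i) tau.
Let chi2_full n := chi2 (prod_space ell m n) (prod_dist ell pi n) (prod_dist ell mu n) (prod_gen ell p L n).

Lemma chi2_comp_nonneg n i tau : In i (seq 0 (ell n)) -> 0 <= chi2_comp n i tau.
Proof. intros Hi. apply in_seq in Hi. apply chi2_nonneg, (pi_nonneg _ _ _ _ (Hchain n i ltac:(lia))). Qed.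

Lemma chi2_full_nonneg n t : 0 <= chi2_full n t.
Proof.
  apply chi2_nonneg. intros y Hy. left. apply (prod_dist_pi_pos ell m mu pi L n (Hchain n) y Hy).
Qed.

Lemma Ssum_chi2 n t : Ssum ell m mu pi L p n t = fsum (seq 0 (ell n)) (fun i => chi2_comp n i (p n i * t)).
Proof.
  apply fsum_ext. intros i Hi. unfold dcomp, Defs.d2. now rewrite pow2_sqrt by now apply chi2_comp_nonneg.
Qed.

Lemma dprod_sq n t : dprod ell m mu pi L p n t ^ 2 = chi2_full n t.
Proof. apply pow2_sqrt, chi2_full_nonneg. Qed.

Lemma Ssum_dprod_sandwich n t : 0 <= t ->
  0 <= Ssum ell m mu pi L p n t /\ Ssum ell m mu pi L p n t <= dprod ell m mu pi L p n t ^ 2 /\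
  dprod ell m mu pi L p n t ^ 2 <= exp (Ssum ell m mu pi L p n t) - 1 /\
  0 <= dprod ell m mu pi L p n t.
Proof.
  intros Ht. rewrite dprod_sq, Ssum_chi2. unfold chi2_full. rewrite (chi2_prod ell m mu pi L p n (Hchain n)) by auto.
  destruct (fprod_1plus_bounds (seq 0 (ell n)) (fun i => chi2_comp n i (p n i * t))) as [Hlo Hhi].
  { intros; now apply chi2_comp_nonneg. }
  repeat split; [apply fsum_nonneg; intros; now apply chi2_comp_nonneg | | | apply sqrt_pos];
    unfold chi2_comp in *; lra.
Qed.

Lemma Ssum_nonincreasing n a b : 0 <= a <= b -> Ssum ell m mu pi L p n b <= Ssum ell m mu pi L p n a.
Proof.
  intros Hab. rewrite !Ssum_chi2. apply fsum_le. intros i Hi. apply in_seq in Hi.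
  apply (chi2_nonincreasing _ _ _ _ (Hchain n i ltac:(lia))).
  pose proof (Hp n i ltac:(lia)). nra.
Qed.

Lemma continuity_pt_Ssum n T : continuity_pt (Ssum ell m mu pi L p n) T.
Proof.
  apply (continuity_pt_ext (fun t => fsum (seq 0 (ell n)) (fun i => chi2_comp n i (p n i * t)))).
  { intros t. symmetry. apply Ssum_chi2. }
  eapply is_derive_continuity_pt, (is_derive_fsum _ (fun i t => chi2_comp n i (p n i * t))).
  intros i _. apply (is_derive_dilate (chi2_comp n i)), is_derive_chi2.
Qed.

Lemma continuity_pt_dprod n T : continuity_pt (dprod ell m mu pi L p n) T.
Proof.
  apply (continuity_pt_comp (chi2_full n) sqrt T).
  - apply continuity_pt_chi2.
  - apply continuity_pt_sqrt, chi2_full_nonneg.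
Qed.

Lemma Ssum_eventually_le n d : 0 < d -> exists t, 0 <= t /\ Ssum ell m mu pi L p n t <= d.
Proof.
  intros Hd. set (d' := d / (INR (ell n) + 1)).
  pose proof (pos_INR (ell n)).
  assert (Hd' : 0 < d') by (apply Rdiv_lt_0_compat; lra).
  destruct (finite_uniform_bound (seq 0 (ell n))
              (fun i T => forall t, T <= t -> chi2_comp n i (p n i * t) <= d')) as [T HT].
  - intros i K K' HK HKK' t Ht. apply HK. lra.
  - intros i Hi. apply in_seq in Hi. pose proof (Hp n i ltac:(lia)) as Hpi.
    destruct (chi2_eventually_le _ _ _ _ (Hchain n i ltac:(lia)) d' Hd') as (Ti & _ & HTi).
    exists (Ti / p n i). intros t Ht. apply HTi.
    apply (Rmult_le_compat_l (p n i)) in Ht; [|lra].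
    now replace (p n i * (Ti / p n i)) with Ti in Ht by (field; lra).
  - exists (Rabs T). split; [apply Rabs_pos|]. rewrite Ssum_chi2.
    apply Rle_trans with (fsum (seq 0 (ell n)) (fun _ => d')).
    + apply fsum_le. intros i Hi. apply HT; [auto | apply Rle_abs].
    + rewrite fsum_const, length_seq. unfold d'.
      apply Rle_trans with (d / (INR (ell n) + 1) * (INR (ell n) + 1)).
      * apply Rmult_le_compat_l; [fold d' |]; lra.
      * right. field. lra.
Qed.
End ProductFamily.

Theorem proposition4p1
  (ell : nat -> nat) (m : nat -> nat -> nat)
  (mu pi : nat -> nat -> nat -> R) (L : nat -> nat -> nat -> nat -> R)
  (p : nat -> nat -> R)
  (Hchain : forall n i, (i < ell n)%nat ->
     finite_chain (seq 0 (m n i)) (mu n i) (L n i) (pi n i))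
  (Hp : forall n i, (i < ell n)%nat -> 0 < p n i)
  (Hpsum : forall n, fsum (seq 0 (ell n)) (p n) <= 1) :
  (L2_cutoff (dprod ell m mu pi L p) <->
   exists tn : nat -> R, (forall n, 0 < tn n) /\
     (forall a, 1 < a -> Un_cv (fun n => Ssum ell m mu pi L p n (a * tn n)) 0) /\
     (forall a, 0 < a < 1 -> cv_infty (fun n => Ssum ell m mu pi L p n (a * tn n))))
  /\
  (forall n eps, 0 < eps ->
     min_time (dprod ell m mu pi L p n) (sqrt (exp eps - 1))
       <= min_time (Ssum ell m mu pi L p n) eps /\
     min_time (Ssum ell m mu pi L p n) eps
       <= min_time (dprod ell m mu pi L p n) (sqrt eps)).
Proof.
  pose proof (Ssum_dprod_sandwich ell m mu pi L p Hchain) as Hsandwich.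
  split.
  - apply (L2_cutoff_iff_sum _ _ Hsandwich), (Ssum_nonincreasing ell m mu pi L p Hchain Hp).
  - intros n eps He. apply (min_time_sandwich _ _ Hsandwich n eps He).
    + intros; apply (continuity_pt_Ssum ell m mu pi L p Hchain).
    + intros; apply (continuity_pt_dprod ell m mu pi L p Hchain).
    + apply (Ssum_eventually_le ell m mu pi L p Hchain Hp).
Qed.
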